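(* Let $X=(X_1,\dots,X_p)^\top$ be a strictly positive random vector following a recursive max-linear structural equation model on a DAG $\mathcal G^*=(V,E^* )$, $V=\{1,\dots,p\}$: $X_j=\max\big(\max_{m\in\mathrm{pa}^*(j)}a_{mj}X_m,\ \epsilon_j\big)$ with $a_{mj}>0$ and mutually independent unit Fréchet innovations $\epsilon_1,\dots,\epsilon_p$. Fix a node $j$ with $\mathrm{pa}^*(j)\neq\emptyset$, and let $\mathrm{nb}^*(j)=\{i:(i,j)\in E^*\text{ or }(j,i)\in E^*\}$. Assume: (A) (non-vanishing error for omitted parents) for every nonempty $A\subseteq\mathrm{nb}^*(j)$ with $A\not\supseteq\mathrm{pa}^*(j)$, $\liminf_{u\to\infty}\big[R^\star_{j\mid A}(u)-R^\star_{j\mid\mathrm{pa}^*(j)}(u)\big]>0$; (B) (no gain from spurious supersets) for every $A\subseteq \mathrm{nb}^*(j)$ with $A\supsetneq\mathrm{pa}^*(j)$, $R^\star_{j\mid A}(u)\ge R^\star_{j\mid\mathrm{pa}^*(j)}(u)$ for all sufficiently large $u$. Then for every sufficiently large fixed threshold $u$, $\mathrm{pa}^*(j)$ is the unique inclusion-minimal minimizer of $A\mapsto R^\star_{j\mid A}(u)$ over nonempty $A\subseteq\mathrm{nb}^*(j)$; that is, it is a minimizer and every minimizer contains $\mathrm{pa}^*(j)$.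
   Context: For each $j$, $F_j$ is the distribution function of $X_j$, $Y_j=1/(1-F_j(X_j))$ and, for a threshold $u>1$, $Z_j=\log Y_j-\log u$. For a nonempty $A\subseteq V\setminus\{j\}$, the multivariate max-linear envelope class is $\mathcal H_A=\{h_A(z_A)=\max(c_0,\max_{m\in A}(z_m+c_{m\to j})): c_0, c_{m\to j}\in\mathbb R\}$, and the population tail prediction risk is $R^\star_{j\mid A}(u)=\inf_{h_A\in\mathcal H_A}\mathbb E\big[|Z_j-h_A(Z_A)|\ \big|\ \max_{m\in A}Z_m>0\big]$. *)

From HB Require Import structures.
From mathcomp Require Import all_boot all_order all_algebra.
From mathcomp Require Import all_classical all_reals all_analysis.
Set Implicit Arguments. Unset Strict Implicit. Unset Printing Implicit Defensive.
Import Order.TTheory GRing.Theory Num.Theory.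
Local Open Scope classical_set_scope.
Local Open Scope ring_scope.

Section Defs.
Context {R : realType} {d : measure_display} {T : measurableType d}.
Context (P : probability T R) (p : nat).

(* E is a DAG on V = 'I_p: there is a ranking strictly increasing along edges
   (equivalently, no directed cycle). *)
Definition is_dag (E : rel 'I_p) : Prop :=
  exists rk : 'I_p -> nat, forall i j, E i j -> (rk i < rk j)%N.

Definition pa (E : rel 'I_p) (j : 'I_p) : {set 'I_p} := [set m | E m j].
Definition nb (E : rel 'I_p) (j : 'I_p) : {set 'I_p} := [set i | E i j || E j i].

Definition mutually_independent (eps : 'I_p -> T -> R) : Prop :=
  forall (S : {set 'I_p}) (B : 'I_p -> set R),
    (forall i, measurable (B i)) ->
    P [set t | forall i, i \in S -> B i (eps i t)] =
    (\prod_(i in S) fine (P (eps i @^-1` B i)))%:E.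

Definition unit_frechet (e : T -> R) : Prop :=
  forall x : R, P [set t | e t <= x] = (if 0 < x then expR (- x^-1) else 0)%:E.

Definition max_linear_sem (E : rel 'I_p) (a : 'I_p -> 'I_p -> R)
  (eps X : 'I_p -> T -> R) : Prop :=
  forall j t, X j t = Num.max (\big[Num.max/0]_(m in pa E j) (a m j * X m t)) (eps j t).

Definition cdf (X : 'I_p -> T -> R) (j : 'I_p) (x : R) : R :=
  fine (P [set t | X j t <= x]).

Definition Yv (X : 'I_p -> T -> R) (j : 'I_p) (t : T) : R :=
  1 / (1 - cdf X j (X j t)).
Definition Zv (X : 'I_p -> T -> R) (u : R) (j : 'I_p) (t : T) : R :=
  ln (Yv X j t) - ln u.

Definition envelope (A : {set 'I_p}) (c0 : R) (c : 'I_p -> R) (z : 'I_p -> R) : R :=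
  \big[Num.max/c0]_(m in A) (z m + c m).

Definition tail_event (X : 'I_p -> T -> R) (u : R) (A : {set 'I_p}) : set T :=
  [set t | (0 < \big[Order.max/-oo]_(m in A) (Zv X u m t)%:E)%E].

Definition cond_risk (X : 'I_p -> T -> R) (u : R) (j : 'I_p) (A : {set 'I_p})
  (c0 : R) (c : 'I_p -> R) : \bar R :=
  ((\int[P]_(t in tail_event X u A)
       (`| Zv X u j t - envelope A c0 c (fun m => Zv X u m t) |)%:E)
   / P (tail_event X u A))%E.

Definition tail_risk (X : 'I_p -> T -> R) (u : R) (j : 'I_p) (A : {set 'I_p}) : \bar R :=
  ereal_inf [set r | exists (c0 : R) (c : 'I_p -> R), r = cond_risk X u j A c0 c].

End Defs.

From HB Require Import structures.
From mathcomp Require Import all_boot all_order all_algebra.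
From mathcomp Require Import all_classical all_reals all_analysis.
Import Order.TTheory GRing.Theory Num.Theory.
Local Open Scope classical_set_scope.
Local Open Scope ring_scope.

(* The model assumptions only make the risks meaningful; the identification
   itself is order-theoretic.  For each fixed threshold, (A) makes
   every candidate set missing a parent strictly worse than pa(j), and (B) makes
   every proper superset no better; this pins pa(j) down as the inclusion-minimal
   minimizer.  Since there are finitely many candidate sets, the thresholds from
   which (A) and (B) hold can be chosen uniformly, i.e. both hold eventually
   along u --> +oo simultaneously for all candidates. *)

Section MinimalMinimizer.
Context {I : finType} {disp : Order.disp_t} {V : orderType disp}.
Variable f : {set I} -> V.
Context {N S : {set I}}.
Hypotheses (S_neq0 : S != finset.set0) (S_sub : S \subset N).
Hypothesis missing_worse :
  forall A : {set I}, A != finset.set0 -> A \subset N -> ~~ (S \subset A) -> (f S < f A)%O.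

Lemma minimizer_supset A : A != finset.set0 -> A \subset N ->
  (forall B : {set I}, B != finset.set0 -> B \subset N -> (f A <= f B)%O) -> S \subset A.
Proof.
move=> A_neq0 A_sub A_min; apply/negPn/negP => SnA.
by have := missing_worse _ A_neq0 A_sub SnA; rewrite ltNge A_min.
Qed.

Hypothesis superset_no_better :
  forall A : {set I}, A \subset N -> S \proper A -> (f S <= f A)%O.

Lemma minimizer_le B : B != finset.set0 -> B \subset N -> (f S <= f B)%O.
Proof.
move=> B_neq0 B_sub; have [SB|SnB] := boolP (S \subset B).
  have [->|neq_BS] := eqVneq B S; first exact: lexx.
  by apply: superset_no_better; rewrite // finset.properEneq eq_sym neq_BS.
exact/ltW/missing_worse.
Qed.

End MinimalMinimizer.

Section EventuallyLarge.
Context {R : realType} {Q : R -> Prop}.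

Lemma near_pinfty_of_ge (u0 : R) : (forall u, u0 <= u -> Q u) ->
  \forall u \near +oo, Q u.
Proof. by move=> Q_ge; apply: filterS Q_ge (nbhs_pinfty_ge (num_real u0)). Qed.

Lemma near_pinfty_ge_above (r : R) : (\forall u \near +oo, Q u) ->
  exists2 u0, r < u0 & forall u, u0 <= u -> Q u.
Proof.
case=> M [_ Q_gt]; exists (Num.max M r + 1); first by rewrite ltr_pwDr ?le_max ?lexx ?orbT.
move=> u le_u; apply: Q_gt; apply: lt_le_trans le_u.
by rewrite ltr_pwDr // le_max lexx.
Qed.

End EventuallyLarge.

Lemma lte_of_gt0_lee_sube {R : realType} {c : R} {x y : \bar R} :
  0 < c -> (c%:E <= x - y)%E -> (y < x)%E.
Proof. by move=> c_gt0 /(lt_le_trans _); rewrite -sube_gt0; apply; rewrite lte_fin. Qed.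

Theorem theorem2 (R : realType) (d : measure_display) (T : measurableType d)
  (P : probability T R) (p : nat) (E : rel 'I_p) (a : 'I_p -> 'I_p -> R)
  (eps X : 'I_p -> T -> R) (j : 'I_p) :
  is_dag E ->
  (forall m i, E m i -> 0 < a m i) ->
  (forall i, measurable_fun setT (eps i)) ->
  (forall i, measurable_fun setT (X i)) ->
  mutually_independent P eps ->
  (forall i, unit_frechet P (eps i)) ->
  max_linear_sem E a eps X ->
  (forall i t, 0 < X i t) ->
  pa E j != finset.set0 ->
  (* (A) non-vanishing error for omitted parents (liminf > 0, written out) *)
  (forall A : {set 'I_p}, A != finset.set0 -> A \subset nb E j -> ~~ (pa E j \subset A) ->
     exists2 c : R, 0 < c & exists u0 : R, forall u, u0 <= u ->
       (c%:E <= tail_risk P X u j A - tail_risk P X u j (pa E j))%E) ->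
  (* (B) no gain from spurious supersets *)
  (forall A : {set 'I_p}, A \subset nb E j -> pa E j \proper A ->
     exists u0 : R, forall u, u0 <= u ->
       (tail_risk P X u j (pa E j) <= tail_risk P X u j A)%E) ->
  exists2 u0 : R, 1 < u0 & forall u, u0 <= u ->
    (forall B : {set 'I_p}, B != finset.set0 -> B \subset nb E j ->
       (tail_risk P X u j (pa E j) <= tail_risk P X u j B)%E) /\
    (forall A : {set 'I_p}, A != finset.set0 -> A \subset nb E j ->
       (forall B : {set 'I_p}, B != finset.set0 -> B \subset nb E j ->
          (tail_risk P X u j A <= tail_risk P X u j B)%E) ->
       pa E j \subset A).
Proof.
move=> _ _ _ _ _ _ _ _ pa_neq0 missing_worse superset_no_better.
set risk := fun u A => tail_risk P X u j A.
have pa_sub_nb : pa E j \subset nb E j.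
  by apply/fintype.subsetP => i; rewrite !inE => ->.
have ev_missing : \forall u \near +oo, forall A : {set 'I_p}, A != finset.set0 -> A \subset nb E j ->
    ~~ (pa E j \subset A) -> (risk u (pa E j) < risk u A)%E.
  apply: filter_forall => A; apply: filter_imply => A_neq0.
  apply: filter_imply => A_sub; apply: filter_imply => paNA.
  have [c c_gt0 [u0 risk_gap]] := missing_worse A A_neq0 A_sub paNA.
  by apply: (near_pinfty_of_ge u0) => u /risk_gap/(lte_of_gt0_lee_sube c_gt0).
have ev_superset : \forall u \near +oo, forall A : {set 'I_p}, A \subset nb E j ->
    pa E j \proper A -> (risk u (pa E j) <= risk u A)%E.
  apply: filter_forall => A; apply: filter_imply => A_sub.
  apply: filter_imply => paA; have [u0] := superset_no_better A A_sub paA.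
  exact: near_pinfty_of_ge.
have [u0 u0_gt1 ev] := near_pinfty_ge_above 1 (filterI ev_missing ev_superset).
exists u0 => // u /ev [risk_missing risk_superset]; split.
  exact: (minimizer_le (risk u) risk_missing risk_superset).
exact: (minimizer_supset (risk u) pa_neq0 pa_sub_nb risk_missing).
Qed.
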